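(* Let $G_1$ and $G_2$ be two vertex-disjoint 2-edge-colored graphs with Hamiltonian alternating cycles $C_1=x_0x_1\cdots x_{2n-1}x_0$ and $C_2=y_0y_1\cdots y_{2m-1}y_0$, respectively, and let $G\in G_1\oplus G_2$. Suppose there is no good pair in $G$ (between $C_1$ and $C_2$), and that for each $i\in\{1,2\}$ there is a vertex of $C_i$ which is non-singular with respect to $C_{3-i}$. Let $m_1=\min\{n,m\}$ and $M_2=\max\{n,m\}$. Then for each vertex $v\in V(G)$ and each even integer $\ell\in[4,4m_1]\cup[2M_2,2n+2m]$, there is an alternating cycle of length $\ell$ in $G$ passing through $v$.
   Context: All graphs are simple, with edges colored red or blue. An alternating cycle is a cycle in which consecutive edges have different colors; a Hamiltonian alternating cycle of a graph is an alternating cycle through all its vertices. For vertex-disjoint 2-edge-colored graphs $G_1,G_2$, the colored generalized sum $G_1\oplus G_2$ is the set of 2-edge-colored graphs $G$ with $V(G)=V(G_1)\cup V(G_2)$, $G\langle V(G_i)\rangle=G_i$ with the same coloring, and exactly one edge (of arbitrary fixed color) between each $u\in V(G_1)$ and $w\in V(G_2)$; these latter edges are the exterior edges. For $v$ on an alternating cycle $C$, $v^r$ (resp. $v^b$) is the neighbor of $v$ on $C$ with $vv^r$ red (resp. $vv^b$ blue). For an exterior edge $vw$ with $v\in V(C_1)$, $w\in V(C_2)$: if $vw$ is red, $vw,v^rw^r$ is a good pair if $v^rw^r$ is red; if $vw$ is blue, $vw,v^bw^b$ is a good pair if $v^bw^b$ is blue. A vertex $v\in V(C_i)$ is singular with respect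 to $C_{3-i}$ if all edges between $v$ and $V(C_{3-i})$ have the same color, and non-singular otherwise. For integers $a\le b$, $[a,b]=\{a,a+1,\dots,b\}$. *)

From mathcomp Require Import all_boot.
Set Implicit Arguments. Unset Strict Implicit. Unset Printing Implicit Defensive.

Section AltCycles.
Variable T : finType.

(* A 2-edge-colored simple graph on vertex type T is given by an
   adjacency relation [adj] (symmetric, irreflexive) and a coloring
   [col] of pairs, [col u v = true] meaning the edge uv is red and
   [false] meaning blue (col is required symmetric). *)
Definition simple_2ec (adj col : rel T) : Prop :=
  [/\ forall u v, adj u v = adj v u,
      forall u, ~~ adj u u &
      forall u v, col u v = col v u].

(* An alternating cycle, given as the cyclic sequence of its vertices
   s = [:: x_0; ...; x_(k-1)] (edges x_i x_(i+1 mod k)): the vertices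
   are distinct, there are at least 3 of them, consecutive vertices are
   adjacent and consecutive edges have different colors. *)
Definition alt_cycle (adj col : rel T) (s : seq T) : bool :=
  if s is x0 :: _ then
    let k := size s in
    let nt i := nth x0 s (i %% k) in
    [&& 3 <= k, uniq s,
     all (fun i => adj (nt i) (nt i.+1)) (iota 0 k) &
     all (fun i => col (nt i) (nt i.+1) != col (nt i.+1) (nt i.+2)) (iota 0 k)]
  else false.

(* v^r and v^b on the cycle s: the neighbor (next or previous vertex on
   the cycle) joined to v by a red (resp. blue) edge. *)
Definition cnb (col : rel T) (s : seq T) (b : bool) (v : T) : T :=
  if col v (next s v) == b then next s v else prev s v.
Definition vr col s v := cnb col s true v.
Definition vb col s v := cnb col s false v.

(* For an exterior edge vw with v on C1 and w on C2, the pair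
   (vw, v^r w^r) [vw red] resp. (vw, v^b w^b) [vw blue] is good. *)
Definition good_pair (col : rel T) (C1 C2 : seq T) (v w : T) : bool :=
  if col v w then col (vr col C1 v) (vr col C2 w)
  else ~~ col (vb col C1 v) (vb col C2 w).

Definition nonsingular (col : rel T) (C : seq T) (v : T) : bool :=
  [exists w1, exists w2, [&& w1 \in C, w2 \in C & col v w1 != col v w2]].

End AltCycles.

Set Warnings "-notation-overridden".
From mathcomp Require Import all_boot zify.
From Stdlib Require Import Classical.
Set Implicit Arguments. Unset Strict Implicit. Unset Printing Implicit Defensive.

(* Parametrise C1 and C2 as x, y : nat -> T, of periods 2n and 2m, so that
   x_t x_(t+1) and y_t y_(t+1) are red exactly for even t.  For i, j of equal
   parity let skew i j say whether the exterior edge x_i y_j has the colour of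
   x_i x_(i+1).  The absence of good pairs makes skew invariant under
   (i, j) |-> (i+1, j+1), so it only depends on the diagonal of (i, j); the
   non-singular vertices make it non-constant for one of the two orientations
   of C2.  If skew is false on the diagonal a and true on a + 2e, then
   x_(a+j) ... x_(a+j+q+2e) y_(j+q) ... y_j is an alternating cycle; for
   m <= n, taking e = 1 or e = n - m + 1 and a suitable q gives every length
   of the two ranges below 2n + 2m, and sliding j makes the cycle pass through
   any vertex.  Length 2n + 2m is reached by a Hamiltonian cycle made of two
   arcs of each cycle, using a diagonal where skew falls and the next one
   where it rises. *)

Lemma exists_switch (f : nat -> bool) K :
  f 0 -> ~~ f K -> exists2 r, r < K & f r && ~~ f r.+1.
Proof.
elim: K => [-> //|K IH] f0 fK.
case fK': (f K); first by exists K; rewrite // fK'.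
by have [r rK fr] := IH f0 (negbT fK'); exists r => //; rewrite ltnS ltnW.
Qed.

Lemma mem_uniq_full (T : finType) (s : seq T) v : uniq s -> size s = #|T| -> v \in s.
Proof.
move=> us sT; apply/negPn/negP => vs.
by have := max_card (mem (v :: s)); rewrite (card_uniqP _) /= ?vs // sT ltnn.
Qed.

Lemma mem_mkseq_lt (T : eqType) (f : nat -> T) k t : t < k -> f t \in mkseq f k.
Proof. by move=> tk; apply: map_f; rewrite mem_iota. Qed.

Section CycleParam.
Variables (T : finType) (adj col : rel T).

Lemma alt_cycle_size (s : seq T) : alt_cycle adj col s -> 3 <= size s.
Proof. by case: s => // x0 s' /and4P[]. Qed.

Lemma alt_cycle_uniq (s : seq T) : alt_cycle adj col s -> uniq s.
Proof. by case: s => // x0 s' /and4P[]. Qed.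

Lemma alt_cycle_mkseq (f : nat -> T) k b : 3 <= k -> ~~ odd k ->
  {in gtn k &, injective f} ->
  (forall t, t.+1 < k -> adj (f t) (f t.+1) /\ col (f t) (f t.+1) = b (+) odd t) ->
  adj (f k.-1) (f 0) /\ col (f k.-1) (f 0) = ~~ b ->
  alt_cycle adj col (mkseq f k).
Proof.
move=> k3 ek inj Eint Eend.
have E t : t < k -> adj (f t) (f (t.+1 %% k)) /\ col (f t) (f (t.+1 %% k)) = b (+) odd t.
  move=> tk; have [tk'|tk'] := ltnP t.+1 k; first by rewrite modn_small //; apply: Eint.
  have -> : t = k.-1 by lia.
  rewrite prednK ?modnn; last lia.
  by case: Eend => -> ->; split => //; lia.
case Hs: (mkseq f k) => [|x0 s']; first by move: (size_mkseq f k); rewrite Hs /=; lia.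
rewrite /alt_cycle -Hs size_mkseq.
have nt i : nth x0 (mkseq f k) (i %% k) = f (i %% k) by rewrite nth_mkseq // ltn_pmod //; lia.
apply/and4P; split => //.
- exact/mkseq_uniqP.
- by apply/allP => i; rewrite mem_iota => /andP[_ hi]; rewrite !nt (modn_small hi); case: (E i hi).
- apply/allP => i; rewrite mem_iota => /andP[_ hi]; rewrite !nt (modn_small hi).
  have -> : i.+2 %% k = (i.+1 %% k).+1 %% k by rewrite -[in RHS]addn1 modnDml addn1.
  have [_ ->] := E i hi; have [_ ->] := E _ (ltn_pmod i.+1 (ltnW (ltnW k3))).
  have [ik|ik] := ltnP i.+1 k; first by rewrite modn_small //=; lia.
  have -> : i.+1 = k by lia.
  by rewrite modnn /=; lia.
Qed.

(* [z t] is the [t]-th vertex of [C] read from some starting point and in some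
   direction, normalised so that [z t z (t+1)] is red exactly for even [t];
   [z (t + N.-1)] stands for the previous vertex [z (t - 1)]. *)
Record cycle_param (C : seq T) (N : nat) (z : nat -> T) : Prop := CycleParam {
  param_periodic : forall t, z (t + N) = z t;
  param_inj : forall s t, s < N -> t < N -> z s = z t -> s = t;
  param_mem : forall t, z t \in C;
  param_onto : forall v, v \in C -> exists t, z t = v;
  param_adj : forall t, adj (z t) (z t.+1);
  param_col : forall t, col (z t) (z t.+1) = ~~ odd t;
  param_nb : forall t,
    (next C (z t) = z t.+1 /\ prev C (z t) = z (t + N.-1)) \/
    (next C (z t) = z (t + N.-1) /\ prev C (z t) = z t.+1) }.

Lemma next_nth_mod (C : seq T) x0 k : uniq C -> k < size C ->
  next C (nth x0 C k) = nth x0 C (k.+1 %% size C).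
Proof.
move=> u hk; rewrite next_nth mem_nth //.
case: C u hk => [|y C'] // u hk; rewrite index_uniq //=; rewrite /= in hk.
have [kC|kC] := ltnP k (size C'); first by rewrite modn_small //; apply: set_nth_default.
have -> : k = size C' by lia.
by rewrite modnn /= nth_default.
Qed.

Lemma alt_cycle_param (C : seq T) :
  alt_cycle adj col C -> exists z, cycle_param C (size C) z.
Proof.
case: C => [|x0 C'] //; set C := x0 :: C'; set N := size C.
rewrite /alt_cycle -/C -/N => /and4P[N3 uC /allP Cadj /allP Ccol].
pose nt k := nth x0 C (k %% N).
have ntS k : nt (k %% N).+1 = nt k.+1 by rewrite /nt -addn1 modnDml addn1.
have ntSS k : nt (k %% N).+2 = nt k.+2 by rewrite /nt -addn2 modnDml addn2.
have kN k : k %% N \in iota 0 N by rewrite mem_iota ltn_pmod //; lia.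
have ntE k : nt (k %% N) = nt k by rewrite /nt modn_mod.
have ntnext k : next C (nt k) = nt k.+1.
  rewrite /nt next_nth_mod // -/N; last by rewrite ltn_pmod //; lia.
  by rewrite -addn1 modnDml addn1.
pose cc t := col (nt t) (nt t.+1).
have ccE t : cc t = cc 0 (+) odd t.
  elim: t => [|t IH]; first by rewrite addbF.
  have := Ccol _ (kN t); rewrite -/(nt _) -/(nt _) -/(nt _) ntE ntS ntSS -/(cc t) -/(cc t.+1).
  by rewrite IH /=; case: (cc 0); case: (odd t); case: (cc t.+1).
pose sh := (~~ cc 0 : nat).
exists (fun t => nt (t + sh)); constructor.
- by move=> t; rewrite /nt addnAC modnDr.
- move=> s t sN tN; rewrite /nt => /eqP; rewrite nth_uniq ?ltn_pmod //; try lia.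
  by rewrite eqn_modDr !modn_small // => /eqP.
- by move=> t; rewrite /nt mem_nth // ltn_pmod //; lia.
- move=> v vC; exists (index v C + (N - sh)).
  rewrite /nt -addnA subnK; last by rewrite /sh; case: (cc 0) => /=; lia.
  by rewrite modnDr modn_small ?index_mem // nth_index.
- by move=> t; rewrite addSn; have := Cadj _ (kN (t + sh)); rewrite -/(nt _) -/(nt _) ntE ntS.
- by move=> t; rewrite addSn -/(cc _) ccE /sh oddD; case: (cc 0); case: (odd t).
- move=> t; left; rewrite ntnext addSn; split => //.
  have -> : nt (t + sh) = nt (t + N.-1 + sh).+1.
    by rewrite /nt (_ : (t + N.-1 + sh).+1 = t + sh + N) ?modnDr //; lia.
  by rewrite -ntnext prev_next.
Qed.

Lemma cnb_eq (C : seq T) v a b c :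
  (next C v = a /\ prev C v = b) \/ (next C v = b /\ prev C v = a) ->
  col v a = c -> col v b = ~~ c -> cnb col C c v = a.
Proof.
by rewrite /cnb => -[[-> ->]|[-> ->]] ca cb; rewrite ?ca ?cb ?eqxx //; case: c {ca cb}.
Qed.

Section Properties.
Variables (C : seq T) (N : nat) (z : nat -> T).
Hypothesis zP : cycle_param C N z.

Lemma param_periodicM t k : z (t + N * k) = z t.
Proof.
elim: k => [|k IH]; first by rewrite muln0 addn0.
by rewrite mulnS addnCA addnC (param_periodic zP).
Qed.

Lemma param_mod t : z t = z (t %% N).
Proof. by rewrite {1}(divn_eq t N) addnC mulnC param_periodicM. Qed.

Lemma param_inj_addl i a b : a < N -> b < N -> z (i + a) = z (i + b) -> a = b.
Proof.
move=> aN bN; rewrite param_mod [z (i + b)]param_mod.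
move/(param_inj zP); rewrite !ltn_pmod; try lia.
by move=> /(_ isT isT) /eqP; rewrite eqn_modDl !modn_small // => /eqP.
Qed.

Hypothesis colsym : forall u v, col u v = col v u.
Hypothesis N_even : ~~ odd N.
Hypothesis N_gt0 : 0 < N.

Lemma param_col_prev t : col (z t) (z (t + N.-1)) = odd t.
Proof.
rewrite colsym -[in LHS](param_periodic zP t).
by rewrite (_ : t + N = (t + N.-1).+1) ?(param_col zP); lia.
Qed.

Lemma vr_param t : vr col C (z t) = if odd t then z (t + N.-1) else z t.+1.
Proof.
have nb := param_nb zP t; rewrite /vr; case: ifP => ot.
- apply: (cnb_eq (b := z t.+1)); rewrite ?param_col_prev ?(param_col zP) ?ot //.
  by case: nb; [right | left].
- by apply: (cnb_eq (b := z (t + N.-1))); rewrite ?param_col_prev ?(param_col zP) ?ot.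
Qed.

Lemma vb_param t : vb col C (z t) = if odd t then z t.+1 else z (t + N.-1).
Proof.
have nb := param_nb zP t; rewrite /vb; case: ifP => ot.
- by apply: (cnb_eq (b := z (t + N.-1))); rewrite ?param_col_prev ?(param_col zP) ?ot.
- apply: (cnb_eq (b := z t.+1)); rewrite ?param_col_prev ?(param_col zP) ?ot //.
  by case: nb; [right | left].
Qed.

Hypothesis adjsym : forall u v, adj u v = adj v u.

(* [z (1 + N.-1 * t)] is [z (1 - t)]: the same cycle traversed backwards. *)
Lemma param_rev : cycle_param C N (fun t => z (1 + N.-1 * t)).
Proof.
have zS t : z (1 + N.-1 * t.+1) = z (N.-1 * t).
  by rewrite (_ : 1 + _ = N.-1 * t + N) ?(param_periodic zP) //; nia.
have zSS t : z (1 + N.-1 * (t + N.-1)) = z (N.-1 * t).+2.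
  by rewrite (_ : 1 + _ = (N.-1 * t).+2 + N * N.-2) ?param_periodicM //; nia.
have oddN1 : odd N.-1 by lia.
constructor.
- move=> t; rewrite (_ : 1 + _ = 1 + N.-1 * t + N * N.-1) ?param_periodicM //; nia.
- move=> s t sN tN; rewrite param_mod [z (1 + _ * t)]param_mod.
  move/(param_inj zP); rewrite !ltn_pmod // => /(_ isT isT) /eqP e.
  have : 1 + N.-1 * s + (s + t) == 1 + N.-1 * t + (s + t) %[mod N].
    by rewrite -modnDml (eqP e) modnDml.
  rewrite (_ : 1 + N.-1 * s + (s + t) = N * s + (1 + t)); last nia.
  rewrite (_ : 1 + N.-1 * t + (s + t) = N * t + (1 + s)); last nia.
  by rewrite (mulnC N s) (mulnC N t) !modnMDl !(addnC 1) eqn_modDr !modn_small // => /eqP ->.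
- by move=> t; apply: (param_mem zP).
- move=> v /(param_onto zP) [t <-]; exists (N.-1 * t + 1).
  rewrite (_ : 1 + _ = t + N * (N.-2 * t).+1) ?param_periodicM //.
  have [K ->] : exists K, N = K.+2 by exists N.-2; lia.
  rewrite /=; nia.
- by move=> t; rewrite zS adjsym add1n (param_adj zP).
- by move=> t; rewrite zS colsym add1n (param_col zP); lia.
- move=> t; rewrite zS zSS add1n.
  have zN : z ((N.-1 * t).+1 + N.-1) = z (N.-1 * t).
    by rewrite (_ : _ + N.-1 = N.-1 * t + N) ?(param_periodic zP) //; lia.
  by case: (param_nb zP (N.-1 * t).+1); rewrite zN => -[-> ->]; [right | left].
Qed.

End Properties.

End CycleParam.

Section Sum.
Variables (T : finType) (adj col : rel T).
Hypothesis adjsym : forall u v, adj u v = adj v u.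
Hypothesis colsym : forall u v, col u v = col v u.
Variables (C1 C2 : seq T) (n m : nat) (x y : nat -> T).
Hypothesis xP : cycle_param adj col C1 n.*2 x.
Hypothesis yP : cycle_param adj col C2 m.*2 y.
Hypothesis n_gt1 : 1 < n.
Hypothesis m_gt1 : 1 < m.
Hypothesis C1C2_disjoint : [disjoint C1 & C2].
Hypothesis C1C2_adj : {in C1 & C2, forall u w, adj u w}.
Hypothesis no_good_pair : {in C1 & C2, forall v w, ~~ good_pair col C1 C2 v w}.

Lemma x_neq_y s t : x s <> y t.
Proof.
by move=> e; have := disjointFr C1C2_disjoint (param_mem xP s); rewrite e (param_mem yP).
Qed.

Lemma x_y_adj s t : adj (x s) (y t).
Proof. exact: C1C2_adj (param_mem xP s) (param_mem yP t). Qed.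

(* [skew i j] says that the exterior edge [x i y j] has the colour of [x i x (i+1)]. *)
Definition skew i j := col (x i) (y j) (+) odd i.

Lemma skew_diagS i j : odd i = odd j -> skew i.+1 j.+1 = skew i j.
Proof.
have n2_even : ~~ odd n.*2 by rewrite odd_double.
have m2_even : ~~ odd m.*2 by rewrite odd_double.
have mono a b : odd a = odd b -> skew a b -> skew a.+1 b.+1.
  move=> ab; have := no_good_pair (param_mem xP a) (param_mem yP b).
  rewrite /good_pair (vr_param xP) ?(vr_param yP) ?(vb_param xP) ?(vb_param yP) //; try lia.
  by rewrite /skew /= -ab; case: (odd a); case: (col _ _); case: (col _ _).
have monoD t a b : odd a = odd b -> skew a b -> skew (a + t) (b + t).
  elim: t a b => [|t IH] a b ab sab; first by rewrite !addn0.
  by rewrite !addnS; apply: mono; [lia | apply: IH].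
have period a b : skew (a + n.*2 * m.*2) (b + n.*2 * m.*2) = skew a b.
  rewrite /skew (param_periodicM xP) mulnC (param_periodicM yP); lia.
(* Around the period of the diagonal, monotonicity gives the converse. *)
move=> ij; apply/idP/idP => [s1|]; last exact: mono.
have NM k : k.+1 + (n.*2 * m.*2).-1 = k + n.*2 * m.*2 by nia.
by have := monoD (n.*2 * m.*2).-1 _ _ _ s1; rewrite !NM period; apply; rewrite /= ij.
Qed.

Lemma skew_diag i j t : odd i = odd j -> skew (i + t) (j + t) = skew i j.
Proof.
move=> ij; elim: t => [|t IH]; first by rewrite !addn0.
by rewrite !addnS skew_diagS // !oddD ij.
Qed.

Lemma skew_addx i j : skew (i + n.*2) j = skew i j.
Proof. by rewrite /skew (param_periodic xP) oddD odd_double addbF. Qed.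

Lemma skew_addyM i j k : skew i (j + m.*2 * k) = skew i j.
Proof. by rewrite /skew (param_periodicM yP). Qed.

Lemma skew_addy i j : skew i (j + m.*2) = skew i j.
Proof. by rewrite -[m.*2]muln1 skew_addyM. Qed.

Lemma skew_addxm i j : odd i = odd j -> skew (i + m.*2) j = skew i j.
Proof. by move=> ij; rewrite -(skew_addy _ j) skew_diag. Qed.

Lemma skew_add_pred i j : odd i = odd j -> skew (i + n.*2.-1) (j + m.*2.-1) = skew i j.
Proof.
move=> ij; rewrite -skew_diagS -?addnS ?prednK ?skew_addx ?skew_addy //; lia.
Qed.

Lemma x_step a c : c = ~~ odd a -> adj (x a) (x a.+1) /\ col (x a) (x a.+1) = c.
Proof. by move->; split; [apply: (param_adj xP) | apply: (param_col xP)]. Qed.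

Lemma y_step_rev a c : c = ~~ odd a -> adj (y a.+1) (y a) /\ col (y a.+1) (y a) = c.
Proof.
by move->; rewrite adjsym colsym; split; [apply: (param_adj yP) | apply: (param_col yP)].
Qed.

Lemma x_y_edge a b c : c = skew a b (+) odd a -> adj (x a) (y b) /\ col (x a) (y b) = c.
Proof. by move->; rewrite /skew -addbA addbb addbF; split => //; apply: x_y_adj. Qed.

Lemma y_x_edge a b c : c = skew a b (+) odd a -> adj (y b) (x a) /\ col (y b) (x a) = c.
Proof. by rewrite adjsym colsym; apply: x_y_edge. Qed.

(* x_i, ..., x_(i+p), y_(j+q), ..., y_j *)
Definition two_arc i j p q t := if t <= p then x (i + t) else y (j + (p + q.+1 - t)).

Lemma two_arc_cycle i j p q : odd i = odd j -> odd p = odd q -> 0 < p + q ->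
  p < n.*2 -> q < m.*2 -> ~~ skew i j -> skew (i + p) (j + q) ->
  alt_cycle adj col (mkseq (two_arc i j p q) (p + q + 2)).
Proof.
move=> ij pq pq0 pn qm sij spq.
have wx t : t <= p -> two_arc i j p q t = x (i + t) by rewrite /two_arc => ->.
have wy t : p < t -> two_arc i j p q t = y (j + (p + q.+1 - t)).
  by rewrite /two_arc ltnNge => /negbTE ->.
apply: (alt_cycle_mkseq (b := ~~ odd i)); [lia | lia | | |].
- move=> s t; rewrite !inE => sk tk; rewrite /two_arc.
  case: leqP => sp; case: leqP => tp e; first by apply: (param_inj_addl xP _ _ e); lia.
  + by case: (x_neq_y e).
  + by case: (x_neq_y (esym e)).
  + by have := param_inj_addl yP _ _ e; lia.
- move=> t tk; have [tp|pt] := ltnP t p.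
    by rewrite (wx t (ltnW tp)) (wx t.+1 tp) addnS; apply: x_step; lia.
  have [->|tp] := eqVneq t p.
    rewrite (wx p) // (wy p.+1 (ltnSn p)) (_ : p + q.+1 - p.+1 = q); last lia.
    by apply: x_y_edge; rewrite spq; lia.
  have {}pt : p < t by lia.
  rewrite (wy t pt) (wy t.+1 (ltnW pt)).
  rewrite (_ : j + (p + q.+1 - t) = (j + (p + q.+1 - t.+1)).+1); last lia.
  by apply: y_step_rev; lia.
- rewrite (wx 0) // addn0 wy; last lia.
  rewrite (_ : p + q.+1 - (p + q + 2).-1 = 0) ?addn0; last lia.
  by apply: y_x_edge; rewrite (negbTE sij); lia.
Qed.

(* x_d, x_(d+1), y_q, ..., y_0, x_(d+2), ..., x_(d+2n-1), y_(2m-1), ..., y_(q+1) *)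
Definition ham_walk d q t :=
  if t <= 1 then x (d + t)
  else if t <= q.+2 then y (q.+2 - t)
  else if t <= q + n.*2 then x (d + (t - q.+1))
  else y (m.*2 + n.*2 + q - t).

Lemma ham_walk_inj d q : q.+2 < m.*2 -> {in gtn (n.*2 + m.*2) &, injective (ham_walk d q)}.
Proof.
move=> qm s t; rewrite !inE => sk tk; rewrite /ham_walk.
by repeat case: ifP => ?; move=> e; first [case: (x_neq_y e) | case: (x_neq_y (esym e))
  | have := param_inj_addl xP _ _ e; lia | have := param_inj yP _ _ e; lia].
Qed.

Lemma ham_walk_cycle d q : ~~ odd d -> odd q -> q.+2 < m.*2 ->
  skew d 0 -> ~~ skew d.+2 0 -> skew d.+1 q -> ~~ skew d q.+1 ->
  alt_cycle adj col (mkseq (ham_walk d q) (n.*2 + m.*2)).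
Proof.
move=> ed oq qm s0 s2 s1q s0q.
have wx1 t : t <= 1 -> ham_walk d q t = x (d + t) by rewrite /ham_walk => ->.
have wy1 t : 1 < t <= q.+2 -> ham_walk d q t = y (q.+2 - t).
  by move=> tq; rewrite /ham_walk ifF ?ifT //; lia.
have wx2 t : q.+2 < t <= q + n.*2 -> ham_walk d q t = x (d + (t - q.+1)).
  by move=> tq; rewrite /ham_walk 2?ifF ?ifT //; lia.
have wy2 t : q + n.*2 < t -> ham_walk d q t = y (m.*2 + n.*2 + q - t).
  by move=> tq; rewrite /ham_walk !ifF //; lia.
apply: (alt_cycle_mkseq (b := true)); [lia | lia | exact: ham_walk_inj | |].
- move=> t tk.
  have [t0|t1] := ltnP t 1.
    have -> : t = 0 by lia.
    by rewrite !wx1 // addn0 addn1; apply: x_step.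
  have [t1'|t2] := ltnP t 2.
    have -> : t = 1 by lia.
    by rewrite wx1 // wy1 // addn1 subSS subn1; apply: x_y_edge; rewrite s1q; lia.
  have [tq|tq] := ltnP t q.+2.
    rewrite !wy1; [|lia..]; rewrite (_ : q.+2 - t = (q.+2 - t.+1).+1); last lia.
    by apply: y_step_rev; lia.
  have [tq'|tq'] := ltnP t q.+3.
    have -> : t = q.+2 by lia.
    rewrite wy1 ?wx2; [|lia..]; rewrite subnn (_ : q.+3 - q.+1 = 2) ?addn2; last lia.
    by apply: y_x_edge; rewrite (negbTE s2); lia.
  have [tn|tn] := ltnP t (q + n.*2).
    rewrite !wx2; [|lia..]; rewrite (_ : t.+1 - q.+1 = (t - q.+1).+1) ?addnS; last lia.
    by apply: x_step; lia.
  have [tn'|tn'] := ltnP t (q + n.*2).+1.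
    have -> : t = q + n.*2 by lia.
    rewrite wx2 ?wy2; [|lia..].
    rewrite (_ : q + n.*2 - q.+1 = n.*2.-1); last lia.
    rewrite (_ : m.*2 + n.*2 + q - (q + n.*2).+1 = m.*2.-1); last lia.
    by apply: x_y_edge; rewrite -[m.*2.-1]add0n skew_add_pred ?s0; lia.
  rewrite !wy2; [|lia..].
  rewrite (_ : m.*2 + n.*2 + q - t = (m.*2 + n.*2 + q - t.+1).+1); last lia.
  by apply: y_step_rev; lia.
- rewrite (wx1 0) // addn0 wy2; last lia.
  rewrite (_ : m.*2 + n.*2 + q - (n.*2 + m.*2).-1 = q.+1); last lia.
  by apply: y_x_edge; rewrite (negbTE s0q); lia.
Qed.

Definition skew_nonconstant :=
  exists i1 j1 i2 j2, [/\ odd i1 = odd j1, odd i2 = odd j2, skew i1 j1 & ~~ skew i2 j2].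

Hypothesis skew_nc : skew_nonconstant.
Hypothesis m_le_n : m <= n.
Hypothesis C1C2_cover : forall v, (v \in C1) || (v \in C2).
Hypothesis card_sum : #|T| = n.*2 + m.*2.

Definition diag_skew t := skew t 0.

Lemma skew_shift_diag t j : ~~ odd t -> skew (t + j) j = diag_skew t.
Proof. by move=> et; rewrite -{2}(add0n j) skew_diag //; lia. Qed.

Lemma skew_diag_skew i j : odd i = odd j -> skew i j = diag_skew (i + m.*2.-1 * j).
Proof.
move=> ij; rewrite -(skew_diag (m.*2.-1 * j) ij) /diag_skew -(skew_addyM _ 0 j).
by rewrite (_ : j + _ = 0 + m.*2 * j) //; nia.
Qed.

Lemma diag_skew_addyM t k : ~~ odd t -> diag_skew (t + m.*2 * k) = diag_skew t.
Proof. by move=> et; rewrite /diag_skew -(skew_addyM _ 0 k) skew_diag //; lia. Qed.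

Lemma exists_diag_fall : exists2 d, ~~ odd d & diag_skew d && ~~ diag_skew (d + 2).
Proof.
have [i1 [j1 [i2 [j2 [ij1 ij2 s1 s2]]]]] := skew_nc.
rewrite skew_diag_skew // in s1; rewrite skew_diag_skew // in s2.
set t1 := i1 + _ in s1; set t2 := i2 + _ in s2.
have e1 : ~~ odd t1 by rewrite /t1 oddD oddM; lia.
have e2 : ~~ odd t2 by rewrite /t2 oddD oddM; lia.
pose K := t2./2 + m.*2.-1 * t1./2.
have fK : ~~ diag_skew (t1 + K.*2).
  rewrite (_ : t1 + K.*2 = t2 + m.*2 * t1) ?diag_skew_addyM //.
  rewrite /K -[in RHS](odd_double_half t1) -[in RHS](odd_double_half t2) (negbTE e1) (negbTE e2).
  by rewrite !doubleD; nia.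
have f0 : diag_skew (t1 + 0.*2) by rewrite addn0.
have [r _ /andP[fr fr']] := exists_switch (f := fun r => diag_skew (t1 + r.*2)) f0 fK.
exists (t1 + r.*2); first by rewrite oddD odd_double addbF.
by rewrite fr addn2 -!addnS -doubleS.
Qed.

Lemma exists_diag_rise d : ~~ odd d -> diag_skew d -> ~~ diag_skew (d + 2) ->
  exists2 r, r < m.-1 & ~~ diag_skew (d + 2 + r.*2) && diag_skew (d + 4 + r.*2).
Proof.
move=> ed sd sd2.
have f0 : ~~ diag_skew (d + 2 + 0.*2) by rewrite addn0.
have fK : ~~ ~~ diag_skew (d + 2 + m.-1.*2).
  by rewrite negbK (_ : d + 2 + _ = d + m.*2 * 1) ?diag_skew_addyM //; lia.
have [r rm /andP[fr fr']] := exists_switch (f := fun r => ~~ diag_skew (d + 2 + r.*2)) f0 fK.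
by exists r; rewrite // fr -(negbK (diag_skew _)) (_ : d + 4 + r.*2 = d + 2 + r.+1.*2) //; lia.
Qed.

Lemma diag_skew_add_diff t : ~~ odd t -> diag_skew (t + (n - m).*2) = diag_skew t.
Proof.
move=> et; rewrite -(diag_skew_addyM 1); last by rewrite oddD odd_double addbF.
by rewrite muln1 -addnA -doubleD subnK // /diag_skew skew_addx.
Qed.

Lemma two_arc_cycle_through a q e v : ~~ odd a -> 0 < q + e ->
  q + e.*2 < n.*2 -> q < m.*2 -> ~~ diag_skew a -> diag_skew (a + e.*2) ->
  exists2 s, alt_cycle adj col s & size s = (q + e).*2.+2 /\ v \in s.
Proof.
move=> ea qe pn qm sa sb; set p := q + e.*2.
have cycle j : alt_cycle adj col (mkseq (two_arc (a + j) j p q) (p + q + 2)).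
  apply: (two_arc_cycle _ _ _ pn qm); [lia | lia | lia | by rewrite skew_shift_diag |].
  by rewrite (_ : a + j + p = a + e.*2 + (j + q)) ?skew_shift_diag //; lia.
have -> : (q + e).*2.+2 = p + q + 2 by lia.
have [/(param_onto xP)[k <-]|/(param_onto yP)[k <-]] := orP (C1C2_cover v).
- pose j := k + n.*2.-1 * a.
  exists (mkseq (two_arc (a + j) j p q) (p + q + 2)); rewrite ?size_mkseq //; split => //.
  have -> : x k = two_arc (a + j) j p q 0.
    by rewrite /two_arc addn0 /j (_ : a + _ = k + n.*2 * a) ?(param_periodicM xP) //; nia.
  by apply: mem_mkseq_lt; lia.
- exists (mkseq (two_arc (a + k) k p q) (p + q + 2)); rewrite ?size_mkseq //; split => //.
  have -> : y k = two_arc (a + k) k p q (p + q).+1.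
    by rewrite /two_arc ifF ?addnS ?subnn ?addn0 //; lia.
  by apply: mem_mkseq_lt; lia.
Qed.

Lemma hamiltonian_cycle : exists2 s, alt_cycle adj col s & size s = n.*2 + m.*2.
Proof.
have [d ed /andP[sd sd2]] := exists_diag_fall.
have [r rm /andP[sr sr']] := exists_diag_rise ed sd sd2.
pose q := m.*2 - 3 - r.*2.
exists (mkseq (ham_walk d q) (n.*2 + m.*2)); last by rewrite size_mkseq.
have dq : odd d.+1 = odd q by lia.
apply: ham_walk_cycle => //; [lia | lia | by rewrite -addn2 | |].
- rewrite -(skew_addxm dq) (_ : d.+1 + m.*2 = d + 4 + r.*2 + q); last lia.
  by rewrite skew_shift_diag //; lia.
- rewrite -skew_addxm; last lia.
  rewrite (_ : d + m.*2 = d + 2 + r.*2 + q.+1); last lia.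
  by rewrite skew_shift_diag //; lia.
Qed.

Lemma alt_cycles_of_length v l : ~~ odd l ->
  (4 <= l <= 4 * m) || (2 * n <= l <= 2 * n + 2 * m) ->
  exists2 s, alt_cycle adj col s & size s = l /\ v \in s.
Proof.
move=> el hl; have [h lh] : exists h, l = h.*2.+2.
  by exists l./2.-1; rewrite -[l in l = _]odd_double_half (negbTE el) /=; lia.
subst l; have h0 : 0 < h by case/orP: hl; lia.
have [hnm|hnm] := eqVneq h (n + m).-1.
  have [s sC ss] := hamiltonian_cycle; exists s => //; split; first by rewrite ss; lia.
  by apply: mem_uniq_full; [apply: alt_cycle_uniq sC | rewrite ss card_sum].
have {}hnm : h.+2 <= n + m by case/orP: hl; lia.
have [d ed /andP[sd sd2]] := exists_diag_fall.
have [r _ /andP[sa sa2]] := exists_diag_rise ed sd sd2.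
have ea : ~~ odd (d + 2 + r.*2) by rewrite !oddD odd_double (negbTE ed).
have sa2' : diag_skew (d + 2 + r.*2 + 1.*2) by rewrite (_ : _ + _ = d + 4 + r.*2) //; lia.
have [h2m|h2m] := leqP h.+1 (2 * m).
  have := two_arc_cycle_through (q := h.-1) (e := 1) v ea.
  by rewrite addn1 prednK //; apply => //; lia.
have {hl h2m} nh : n <= h.+1 by case/orP: hl; lia.
have sb : diag_skew (d + 2 + r.*2 + (n - m).+1.*2).
  rewrite (_ : d + 2 + r.*2 + _ = d + 2 + r.*2 + 2 + (n - m).*2); last lia.
  by rewrite diag_skew_add_diff // oddD (negbTE ea).
have := two_arc_cycle_through (q := h - (n - m).+1) (e := (n - m).+1) v ea.
by rewrite subnK; [apply => //; lia | lia].
Qed.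

End Sum.

Section Orientation.
Variables (T : finType) (adj col : rel T).
Hypothesis colsym : forall u v, col u v = col v u.
Variables (C1 C2 : seq T) (n m : nat) (x y : nat -> T).
Hypothesis xP : cycle_param adj col C1 n.*2 x.
Hypothesis yP : cycle_param adj col C2 m.*2 y.
Hypothesis m_gt0 : 0 < m.

Lemma skew_const z : ~ skew_nonconstant col x z ->
  forall i j, odd i = odd j -> skew col x z i j = skew col x z 0 0.
Proof.
move=> nc i j ij.
case sij: (skew col x z i j); case s00: (skew col x z 0 0) => //; case: nc.
- by exists i, j, 0, 0; rewrite sij s00.
- by exists 0, 0, i, j; rewrite sij s00.
Qed.

(* Read with the reversed [y], the edges [x i y j] with [i], [j] of opposite
   parities get indices of equal parity.  If skew were constant for both
   readings, the colour of [x i y j] would only depend on the parities of [i]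
   and [j], which the two non-singular vertices rule out. *)
Lemma skew_nonconstant_either :
  (exists2 v, v \in C1 & nonsingular col C2 v) ->
  (exists2 w, w \in C2 & nonsingular col C1 w) ->
  skew_nonconstant col x y \/ skew_nonconstant col x (fun t => y (1 + m.*2.-1 * t)).
Proof.
move=> [v vC ns1] [w wC ns2]; set y' := fun t => _.
have [|c1] := classic (skew_nonconstant col x y); first by left.
have [|c2] := classic (skew_nonconstant col x y'); first by right.
have colE i j : col (x i) (y j) =
    (if odd i == odd j then skew col x y 0 0 else skew col x y' 0 0) (+) odd i.
  case: eqP => ij; first by rewrite -(skew_const c1 ij) /skew -addbA addbb addbF.
  have yj : y' (m.*2.-1 * j + 1) = y j.
    rewrite /y' -[in RHS](param_periodicM yP j (1 + m.*2.-2 * j)); congr y.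
    have [K ->] : exists K, m.*2 = K.+2 by exists m.*2.-2; lia.
    by rewrite /=; nia.
  rewrite -yj -(skew_const c2 (i := i) (j := m.*2.-1 * j + 1)); last by rewrite oddD oddM; lia.
  by rewrite /skew -addbA addbb addbF.
move: ns1 ns2; have [i <-] := param_onto xP vC; have [j <-] := param_onto yP wC.
case/existsP => _ /existsP[_ /and3P[/(param_onto yP)[j1 <-] /(param_onto yP)[j2 <-] ns1]].
case/existsP => _ /existsP[_ /and3P[/(param_onto xP)[i1 <-] /(param_onto xP)[i2 <-] ns2]].
move: ns1 ns2; rewrite ![col (y j) _]colsym !colE.
by case: (odd i); case: (odd j); case: (odd i1); case: (odd i2); case: (odd j1); case: (odd j2);
  case: (skew col x y 0 0); case: (skew col x y' 0 0).
Qed.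

End Orientation.

Lemma card_disjoint_cover (T : finType) (s1 s2 : seq T) : uniq s1 -> uniq s2 ->
  [disjoint s1 & s2] -> (forall v, (v \in s1) || (v \in s2)) -> #|T| = size s1 + size s2.
Proof.
move=> u1 u2 dis cov; rewrite -size_cat.
have /card_uniqP <- : uniq (s1 ++ s2).
  by rewrite cat_uniq u1 u2 -disjoint_has disjoint_sym dis.
by rewrite cardT; apply/esym/eq_cardT => v; rewrite mem_cat cov.
Qed.

Section AltCyclesInSum.
Variables (T : finType) (adj col : rel T).
Hypothesis adjsym : forall u v, adj u v = adj v u.
Hypothesis colsym : forall u v, col u v = col v u.

Lemma alt_cycles_in_sum_le (C1 C2 : seq T) n m :
  alt_cycle adj col C1 -> size C1 = n.*2 -> alt_cycle adj col C2 -> size C2 = m.*2 ->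
  [disjoint C1 & C2] -> (forall v, (v \in C1) || (v \in C2)) ->
  {in C1 & C2, forall u w, adj u w} ->
  {in C1 & C2, forall v w, ~~ good_pair col C1 C2 v w} ->
  (exists2 v, v \in C1 & nonsingular col C2 v) ->
  (exists2 w, w \in C2 & nonsingular col C1 w) ->
  m <= n -> forall v l, ~~ odd l -> (4 <= l <= 4 * m) || (2 * n <= l <= 2 * n + 2 * m) ->
  exists2 s, alt_cycle adj col s & size s = l /\ v \in s.
Proof.
move=> C1alt C1n C2alt C2m dis cov ext ngp ns1 ns2 mn.
have [x] := alt_cycle_param C1alt; rewrite C1n => xP.
have [y] := alt_cycle_param C2alt; rewrite C2m => yP.
have n1 : 1 < n by have := alt_cycle_size C1alt; lia.
have m1 : 1 < m by have := alt_cycle_size C2alt; lia.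
have card : #|T| = n.*2 + m.*2.
  by rewrite -C1n -C2m (card_disjoint_cover (alt_cycle_uniq C1alt) (alt_cycle_uniq C2alt)).
have m2_even : ~~ odd m.*2 by rewrite odd_double.
have m2_gt0 : 0 < m.*2 by lia.
have yP' := param_rev yP colsym m2_even m2_gt0 adjsym.
have [nc|nc] := skew_nonconstant_either colsym xP yP (ltnW m1) ns1 ns2.
- exact: (alt_cycles_of_length adjsym colsym xP yP n1 m1 dis ext ngp nc mn cov card).
- exact: (alt_cycles_of_length adjsym colsym xP yP' n1 m1 dis ext ngp nc mn cov card).
Qed.

Lemma good_pair_sym (C1 C2 : seq T) v w :
  good_pair col C2 C1 w v = good_pair col C1 C2 v w.
Proof. by rewrite /good_pair colsym [col (vr _ _ w) _]colsym [col (vb _ _ w) _]colsym. Qed.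

Lemma alt_cycles_in_sum (C1 C2 : seq T) n m :
  alt_cycle adj col C1 -> size C1 = n.*2 -> alt_cycle adj col C2 -> size C2 = m.*2 ->
  [disjoint C1 & C2] -> (forall v, (v \in C1) || (v \in C2)) ->
  {in C1 & C2, forall u w, adj u w} ->
  {in C1 & C2, forall v w, ~~ good_pair col C1 C2 v w} ->
  (exists2 v, v \in C1 & nonsingular col C2 v) ->
  (exists2 w, w \in C2 & nonsingular col C1 w) ->
  forall v l, ~~ odd l ->
  (4 <= l <= 4 * minn n m) || (2 * maxn n m <= l <= 2 * n + 2 * m) ->
  exists2 s, alt_cycle adj col s & size s = l /\ v \in s.
Proof.
move=> C1alt C1n C2alt C2m dis cov ext ngp ns1 ns2 v l.
have [mn|/ltnW nm] := leqP m n.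
  exact: (alt_cycles_in_sum_le C1alt C1n C2alt C2m dis cov ext ngp ns1 ns2 mn).
rewrite [2 * n + _]addnC.
apply: (alt_cycles_in_sum_le C2alt C2m C1alt C1n) => //.
- by rewrite disjoint_sym.
- by move=> u; rewrite orbC.
- by move=> w u wC uC; rewrite adjsym ext.
- by move=> w u wC uC; rewrite good_pair_sym ngp.
Qed.

End AltCyclesInSum.

Theorem proposition3p11 (T : finType) (adj col : rel T) (V1 V2 : {set T})
    (n m : nat) (C1 C2 : seq T) :
  simple_2ec adj col ->
  (* V(G) = V(G1) \cup V(G2), vertex-disjoint *)
  [disjoint V1 & V2] -> V1 :|: V2 = setT ->
  (* G in G1 (+) G2: every u in V1 and w in V2 are joined by an edge *)
  (forall u w, u \in V1 -> w \in V2 -> adj u w) ->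
  (* C1, C2 Hamiltonian alternating cycles of G1 = G<V1>, G2 = G<V2> *)
  alt_cycle adj col C1 -> [set x in C1] = V1 -> size C1 = n.*2 ->
  alt_cycle adj col C2 -> [set x in C2] = V2 -> size C2 = m.*2 ->
  (* no good pair *)
  (forall v w, v \in V1 -> w \in V2 -> ~~ good_pair col C1 C2 v w) ->
  (* non-singular vertices *)
  (exists2 v, v \in V1 & nonsingular col C2 v) ->
  (exists2 w, w \in V2 & nonsingular col C1 w) ->
  forall (v : T) (l : nat), ~~ odd l ->
    (4 <= l <= 4 * minn n m) || (2 * maxn n m <= l <= 2 * n + 2 * m) ->
    exists2 s : seq T, alt_cycle adj col s & (size s = l) /\ (v \in s).
Proof.
move=> [adjsym _ colsym] dis cov ext C1alt V1E C1n C2alt V2E C2m ngp ns1 ns2.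
subst V1 V2.
have setE (s : seq T) : [set x in s] =i s by move=> u; rewrite inE.
apply: (alt_cycles_in_sum adjsym colsym C1alt C1n C2alt C2m).
- by rewrite -(eq_disjoint (setE C1)) -(eq_disjoint_r (setE C2)).
- by move=> u; have := in_setT u; rewrite -cov !inE.
- by move=> u w uC wC; apply: ext; rewrite setE.
- by move=> u w uC wC; apply: ngp; rewrite setE.
- by case: ns1 => u; rewrite setE; exists u.
- by case: ns2 => w; rewrite setE; exists w.
Qed.
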